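(* Let $(X,d)$ be a complete CAT(0) space and let $(A,B)$ be a pair of nonempty, closed, convex, bounded subsets of $X$ which is proximal. Let $T:A\cup B\to A\cup B$ be a noncyclic relatively nonexpansive mapping. Then $T$ is nonexpansive, i.e., $d(Tx,Ty)\le d(x,y)$ for all $x,y\in A\cup B$.
   Context: A CAT(0) space is a geodesic space in which every geodesic triangle satisfies $d(x,y)\le d_{\mathbb{E}^2}(\bar x,\bar y)$ for all points $x,y$ of the triangle and their comparison points in a Euclidean comparison triangle with the same side lengths. $\operatorname{dist}(A,B)=\inf\{d(x,y):x\in A,y\in B\}$. The pair $(A,B)$ is proximal if for every $(a,b)\in A\times B$ there is $(a',b')\in A\times B$ with $d(a,b')=d(a',b)=\operatorname{dist}(A,B)$. $T$ is relatively nonexpansive if $d(Tx,Ty)\le d(x,y)$ for all $x\in A$, $y\in B$, and noncyclic if $T(A)\subseteq A$, $T(B)\subseteq B$. *)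

From mathcomp Require Import all_boot all_order all_algebra.
From mathcomp Require Import all_classical all_reals.
Set Implicit Arguments. Unset Strict Implicit. Unset Printing Implicit Defensive.
Import Order.TTheory GRing.Theory Num.Theory.
Local Open Scope ring_scope.
Local Open Scope classical_set_scope.

Section CAT0.
Variables (R : realType) (X : Type) (d : X -> X -> R).

Definition is_metric : Prop :=
  [/\ (forall x y, 0 <= d x y),
      (forall x y, d x y = 0 <-> x = y),
      (forall x y, d x y = d y x) &
      (forall x y z, d x z <= d x y + d y z)].

Definition geodesic (g : R -> X) (x y : X) : Prop :=
  g 0 = x /\ g 1 = y /\
  forall s t, 0 <= s <= 1 -> 0 <= t <= 1 -> d (g s) (g t) = `|s - t| * d x y.

Definition geodesic_space : Prop :=
  forall x y, exists g, geodesic g x y.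

Definition edist (p q : R * R) : R :=
  Num.sqrt ((p.1 - q.1) ^+ 2 + (p.2 - q.2) ^+ 2).

Definition lerp (p q : R * R) (t : R) : R * R :=
  (p.1 + t * (q.1 - p.1), p.2 + t * (q.2 - p.2)).

(* p is a point of the geodesic triangle with sides g1 (x->y), g2 (y->z),
   g3 (z->x), and pb is its comparison point in the comparison triangle
   xb yb zb *)
Definition tri_point (g1 g2 g3 : R -> X) (xb yb zb : R * R)
  (p : X) (pb : R * R) : Prop :=
  exists t, 0 <= t <= 1 /\
   [\/ p = g1 t /\ pb = lerp xb yb t,
       p = g2 t /\ pb = lerp yb zb t |
       p = g3 t /\ pb = lerp zb xb t].

Definition CAT0_ineq : Prop :=
  forall (x y z : X) (g1 g2 g3 : R -> X) (xb yb zb : R * R),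
    geodesic g1 x y -> geodesic g2 y z -> geodesic g3 z x ->
    edist xb yb = d x y -> edist yb zb = d y z -> edist zb xb = d z x ->
    forall p q pb qb, tri_point g1 g2 g3 xb yb zb p pb ->
      tri_point g1 g2 g3 xb yb zb q qb -> d p q <= edist pb qb.

Definition CAT0_space : Prop := [/\ is_metric, geodesic_space & CAT0_ineq].

Definition cauchy_seq (u : nat -> X) : Prop :=
  forall e : R, 0 < e -> exists N, forall m n, (N <= m)%N -> (N <= n)%N ->
    d (u m) (u n) < e.

Definition converges_to (u : nat -> X) (l : X) : Prop :=
  forall e : R, 0 < e -> exists N, forall n, (N <= n)%N -> d (u n) l < e.

Definition complete_space : Prop :=
  forall u, cauchy_seq u -> exists l, converges_to u l.

Definition closed_set (A : set X) : Prop :=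
  forall u l, (forall n, A (u n)) -> converges_to u l -> A l.

Definition convex_set (A : set X) : Prop :=
  forall x y g, A x -> A y -> geodesic g x y ->
    forall t, 0 <= t <= 1 -> A (g t).

Definition bounded_set (A : set X) : Prop :=
  exists M : R, forall x y, A x -> A y -> d x y <= M.

Definition dist_sets (A B : set X) : R :=
  inf [set r | exists a b, A a /\ B b /\ r = d a b].

Definition proximal (A B : set X) : Prop :=
  forall a b, A a -> B b -> exists a' b', A a' /\ B b' /\
    d a b' = dist_sets A B /\ d a' b = dist_sets A B.

Definition relatively_nonexpansive (A B : set X) (T : X -> X) : Prop :=
  forall x y, A x -> B y -> d (T x) (T y) <= d x y.

Definition noncyclic (A B : set X) (T : X -> X) : Prop :=
  (forall x, A x -> A (T x)) /\ (forall x, B x -> B (T x)).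

End CAT0.

From mathcomp Require Import all_boot all_order all_algebra.
From mathcomp Require Import all_classical all_reals.
From mathcomp Require Import ring lra.

(* The CN inequality of Bruhat and Tits, read off a Euclidean comparison
   triangle, yields two facts: if q is a point of a convex set S nearest to r,
   then d(p,q)^2 + d(q,r)^2 <= d(p,r)^2 for every p in S; and any four points
   satisfy d(x,v)^2 + d(y,u)^2 <= d(x,y)^2 + d(u,v)^2 + d(x,u)^2 + d(y,v)^2.
   For x, y in A with proximal partners u, v in B (d(x,u) = d(y,v) = D, the
   distance of A and B), y is nearest to v in A and v is nearest to y in B;
   with the quadrilateral bound this gives the Pythagorean identity
   d(x,v)^2 = d(x,y)^2 + D^2.  Relative nonexpansiveness keeps T y and T v at
   distance D, so the identity also holds for T x, T y, T v, whence
   d(Tx,Ty)^2 = d(Tx,Tv)^2 - D^2 <= d(x,v)^2 - D^2 = d(x,y)^2.  Exchanging A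
   and B handles B; mixed pairs are the hypothesis itself. *)

Set Implicit Arguments.
Unset Strict Implicit.
Unset Printing Implicit Defensive.
Import Order.TTheory GRing.Theory Num.Theory.
Local Open Scope ring_scope.
Local Open Scope classical_set_scope.

Section EuclideanPlane.
Variable R : realType.
Implicit Types (p q r : R * R) (a b c t : R).

Lemma edist_sqr p q : edist p q ^+ 2 = (p.1 - q.1) ^+ 2 + (p.2 - q.2) ^+ 2.
Proof. by rewrite sqr_sqrtr // addr_ge0 // sqr_ge0. Qed.

Lemma edist_eq p q c :
  0 <= c -> (p.1 - q.1) ^+ 2 + (p.2 - q.2) ^+ 2 = c ^+ 2 -> edist p q = c.
Proof. by move=> c0 hc; rewrite /edist hc sqrtr_sqr ger0_norm. Qed.

Lemma edistC p q : edist p q = edist q p.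
Proof. by rewrite /edist -sqrrN opprB -[(p.2 - q.2) ^+ 2]sqrrN opprB. Qed.

Lemma lerp1 p q : lerp p q 1 = q.
Proof. by case: p q => [p1 p2] [q1 q2]; rewrite /lerp /= !mul1r !subrKC. Qed.

Lemma edist_lerp_sqr p q r t :
  edist (lerp p q t) r ^+ 2 =
  (1 - t) * edist p r ^+ 2 + t * edist q r ^+ 2 - t * (1 - t) * edist p q ^+ 2.
Proof.
rewrite !edist_sqr; case: p q r => [p1 p2] [q1 q2] [r1 r2]; rewrite /lerp /=.
ring.
Qed.

Lemma exists_comparison_triangle a b c :
  0 <= a -> 0 <= b -> 0 <= c -> a <= b + c -> b <= a + c -> c <= a + b ->
  exists p q r, [/\ edist p q = a, edist q r = b & edist r p = c].
Proof.
move=> a0 b0 c0 abc bac cab.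
have [a_eq0|an0] := eqVneq a 0.
  have -> : b = c by lra.
  rewrite a_eq0.
  by exists (0, 0), (0, 0), (c, 0); split; apply: edist_eq => //=; ring.
(* apex above the base [(0,0), (a,0)], at the abscissa given by the law of cosines *)
pose x := (a ^+ 2 + c ^+ 2 - b ^+ 2) / (2 * a).
have height2_ge0 : 0 <= c ^+ 2 - x ^+ 2.
  have -> : c ^+ 2 - x ^+ 2 =
      (b - a + c) * (b + a - c) * ((a + c - b) * (a + c + b)) / (4 * a ^+ 2).
    by rewrite /x; field.
  by apply: divr_ge0; [apply: mulr_ge0; apply: mulr_ge0; lra | rewrite mulr_ge0 // sqr_ge0].
pose h := Num.sqrt (c ^+ 2 - x ^+ 2).
have hh : h ^+ 2 = c ^+ 2 - x ^+ 2 by rewrite sqr_sqrtr.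
exists (0, 0), (a, 0), (x, h); split; apply: edist_eq => //=.
- by ring.
- have -> : (a - x) ^+ 2 + (0 - h) ^+ 2 = a ^+ 2 - 2 * a * x + c ^+ 2
    by rewrite sub0r sqrrN hh; ring.
  by rewrite /x; field.
- by rewrite !subr0 hh; ring.
Qed.

End EuclideanPlane.

Lemma le0_of_le_scaled (R : realFieldType) (e c : R) :
  0 <= c -> (forall t, 0 < t <= 1 -> e <= t * c) -> e <= 0.
Proof.
move=> c0 le_scaled; rewrite leNgt; apply/negP => e_gt0.
have ec_gt0 : 0 < e + c by lra.
have t_gt0 : 0 < e / (e + c) by rewrite divr_gt0.
have t_le1 : e / (e + c) <= 1 by rewrite ler_pdivrMr // mul1r lerDl.
have := le_scaled (e / (e + c)); rewrite t_gt0 t_le1 => /(_ isT).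
rewrite mulrAC ler_pdivlMr //; nra.
Qed.

Section CAT0.
Variables (R : realType) (X : Type) (d : X -> X -> R).
Hypothesis cat0 : CAT0_space d.

Let d_ge0 x y : 0 <= d x y. Proof. by case: cat0 => -[]. Qed.
Let d_sym x y : d x y = d y x. Proof. by case: cat0 => -[]. Qed.
Let d_triangle x y z : d x z <= d x y + d y z. Proof. by case: cat0 => -[]. Qed.

Let ler_dist_sqr x y u v : d x y <= d u v -> d x y ^+ 2 <= d u v ^+ 2.
Proof. by move=> le; rewrite lerXn2r // nnegrE. Qed.

Lemma CN_inequality (q p r : X) (g : R -> X) (t : R) :
  geodesic d g q p -> 0 <= t <= 1 ->
  d (g t) r ^+ 2 <=
  (1 - t) * d q r ^+ 2 + t * d p r ^+ 2 - t * (1 - t) * d q p ^+ 2.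
Proof.
case: cat0 => _ geod cat0_ineq gqp t01.
have [g2 g2pr] := geod p r; have [g3 g3rq] := geod r q.
have [qb [pb [rb [e1 e2 e3]]]] : exists qb pb rb,
    [/\ edist qb pb = d q p, edist pb rb = d p r & edist rb qb = d r q].
  apply: exists_comparison_triangle => //.
  - by have := d_triangle q r p; rewrite (d_sym q r) (d_sym r p); lra.
  - by have := d_triangle p q r; rewrite (d_sym p q) (d_sym q r); lra.
  - by have := d_triangle r p q; rewrite (d_sym r p) (d_sym p q); lra.
have gt_pt : tri_point g g2 g3 qb pb rb (g t) (lerp qb pb t).
  by exists t; split => //; apply: Or31.
have r_pt : tri_point g g2 g3 qb pb rb r (lerp pb rb 1).
  by exists 1; split; [rewrite lexx ler01 | apply: Or32; case: g2pr => _ [->]].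
have := cat0_ineq _ _ _ _ _ _ _ _ _ gqp g2pr g3rq e1 e2 e3 _ _ _ _ gt_pt r_pt.
move=> /(@lerXn2r _ 2); rewrite !nnegrE sqrtr_ge0 d_ge0 => /(_ isT isT).
by rewrite lerp1 edist_lerp_sqr (edistC qb) e1 e2 e3 (d_sym r q).
Qed.

Lemma nearest_point_sqr (S : set X) (r q p : X) :
  convex_set d S -> S q -> S p -> (forall w, S w -> d q r <= d w r) ->
  d p q ^+ 2 + d q r ^+ 2 <= d p r ^+ 2.
Proof.
move=> convS Sq Sp q_nearest; case: cat0 => _ geod _.
have [g gqp] := geod q p.
rewrite -subr_le0; apply: (le0_of_le_scaled (sqr_ge0 (d p q))).
move=> t /andP[t_gt0 t_le1]; have t01 : 0 <= t <= 1 by rewrite ltW.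
have CN := CN_inequality r gqp t01.
have near := ler_dist_sqr (q_nearest _ (convS _ _ _ Sq Sp gqp _ t01)).
rewrite -(ler_pM2l t_gt0); rewrite (d_sym q p) in CN; lra.
Qed.

Lemma quadrilateral_sqr (x y u v : X) :
  d x v ^+ 2 + d y u ^+ 2 <= d x y ^+ 2 + d u v ^+ 2 + d x u ^+ 2 + d y v ^+ 2.
Proof.
case: cat0 => _ geod _; have [g gxv] := geod x v.
have half01 : 0 <= (2^-1 : R) <= 1 by rewrite invr_ge0 ler0n invf_le1 ?ler1n.
have CNy := CN_inequality y gxv half01; have CNu := CN_inequality u gxv half01.
set m := g 2^-1 in CNy CNu.
have yu_sqr : d y u ^+ 2 <= 2 * (d m y ^+ 2 + d m u ^+ 2).
  have yu_le : d y u <= d m y + d m u by rewrite (d_sym m y); apply: d_triangle.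
  have := d_ge0 y u; have := sqr_ge0 (d m y - d m u); nra.
rewrite (d_sym v y) (d_sym v u) (d_sym u v) in CNy CNu *; lra.
Qed.

Section ProximalPair.
Variables (A B : set X) (D : R).
Hypotheses (convA : convex_set d A) (convB : convex_set d B).
Hypothesis D_le : forall a b, A a -> B b -> D <= d a b.
Hypothesis partnerA : forall a, A a -> exists2 b, B b & d a b = D.

Lemma proximal_pythagoras x y v : A x -> A y -> B v -> d y v = D ->
  d x v ^+ 2 = d x y ^+ 2 + D ^+ 2.
Proof.
move=> Ax Ay Bv yv; have [u Bu xu] := partnerA Ax.
have y_nearest : d x y ^+ 2 + d y v ^+ 2 <= d x v ^+ 2.
  by apply: nearest_point_sqr convA Ay Ax _ => w Aw; rewrite yv D_le.
have v_nearest : d u v ^+ 2 + d v y ^+ 2 <= d u y ^+ 2.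
  by apply: nearest_point_sqr convB Bv Bu _ => w Bw; rewrite d_sym yv (d_sym w) D_le.
have := quadrilateral_sqr x y u v.
rewrite (d_sym v y) (d_sym u y) xu yv in v_nearest y_nearest *.
by move=> quad; apply/eqP; rewrite eq_le; apply/andP; split; lra.
Qed.

Lemma nonexpansive_on_proximal_side (T : X -> X) :
  noncyclic A B T -> relatively_nonexpansive d A B T ->
  forall x y, A x -> A y -> d (T x) (T y) <= d x y.
Proof.
move=> [TA TB] Tne x y Ax Ay; have [v Bv yv] := partnerA Ay.
have TyTv : d (T y) (T v) = D.
  by apply/le_anti; rewrite -{1}yv Tne //= (D_le (TA _ Ay) (TB _ Bv)).
have pyth_T := proximal_pythagoras (TA _ Ax) (TA _ Ay) (TB _ Bv) TyTv.
have pyth := proximal_pythagoras Ax Ay Bv yv.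
have Txv := ler_dist_sqr (Tne _ _ Ax Bv).
by rewrite -ler_sqr ?nnegrE //; lra.
Qed.

End ProximalPair.

End CAT0.

Theorem mainTheorem10 (R : realType) (X : Type) (d : X -> X -> R)
  (A B : set X) (T : X -> X) :
  CAT0_space d -> complete_space d ->
  A !=set0 -> B !=set0 ->
  closed_set d A -> closed_set d B ->
  convex_set d A -> convex_set d B ->
  bounded_set d A -> bounded_set d B ->
  proximal d A B ->
  noncyclic A B T ->
  relatively_nonexpansive d A B T ->
  forall x y, (A `|` B) x -> (A `|` B) y -> d (T x) (T y) <= d x y.
Proof.
move=> cat0 _ [a0 Aa0] [b0 Bb0] _ _ convA convB _ _ prox [TA TB] Tne.
have d_ge0 x y : 0 <= d x y by case: cat0 => -[].
have d_sym x y : d x y = d y x by case: cat0 => -[].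
set D := dist_sets d A B.
have D_le a b : A a -> B b -> D <= d a b.
  by move=> Aa Bb; apply: ge_inf; [exists 0 => _ [? [? [_ [_ ->]]]] | exists a, b].
have partnerA a : A a -> exists2 b, B b & d a b = D.
  by move=> Aa; have [_ [b [_ [Bb [ab _]]]]] := prox a b0 Aa Bb0; exists b.
have partnerB b : B b -> exists2 a, A a & d b a = D.
  by move=> Bb; have [a [_ [Aa [_ [_ ab]]]]] := prox a0 b Aa0 Bb; exists a => //; rewrite d_sym.
have TneBA : relatively_nonexpansive d B A T.
  by move=> x y Bx Ay; rewrite d_sym (d_sym x); apply: Tne.
move=> x y [Ax|Bx] [Ay|By].
- exact: (nonexpansive_on_proximal_side cat0 convA convB D_le partnerA (conj TA TB) Tne).
- exact: Tne.
- exact: TneBA.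
- apply: (nonexpansive_on_proximal_side cat0 convB convA _ partnerB (conj TB TA) TneBA) => //.
  by move=> b a Bb Aa; rewrite d_sym D_le.
Qed.
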